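(* Let $0\le r<1$. In the RRH with redirection parameter $r$, for every fixed integer $k\ge 1$, $$\lim_{N\to\infty}\frac{\mathbb{E}[\mathcal{N}_k(N)]}{N}=\frac{1-r}{(k-r+1)(k-r)}.$$
   Context: The RRH with redirection parameter $r\in[0,1)$ is the following random hypergraph process. At size $N=1$ it has vertex set $\{v_1\}$ and edge set $\{\{v_1\}\}$. Given the hypergraph of size $N$ (vertices $v_1,\dots,v_N$, $N$ edges), choose an existing edge $e$ uniformly at random and add a new vertex $v_{N+1}$ and one new edge, as follows. If $e=\{v_1\}$, the new edge is $\{v_1,v_{N+1}\}$. Otherwise write $e=\{v_{i_1},\dots,v_{i_n}\}$ with $1=i_1<\dots<i_n$, $n\ge2$; independently, with probability $1-r$ the new edge is $e\cup\{v_{N+1}\}$ and with probability $r$ it is $\{v_{i_1},\dots,v_{i_{n-1}},v_{N+1}\}$. The degree of a vertex is the number of edges containing it; $\mathcal{N}_k(N)$ is the number of vertices of degree $k$ at size $N$. *)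

From HB Require Import structures.
From mathcomp Require Import all_boot all_order all_algebra.
From mathcomp Require Import all_classical all_reals.
From mathcomp Require Import topology normedtype sequences.
Set Implicit Arguments. Unset Strict Implicit. Unset Printing Implicit Defensive.
Import Order.TTheory GRing.Theory Num.Theory.
Local Open Scope ring_scope.

(* A hypergraph of size N: vertices are 1..N, and the state is the list of its
   N edges, each edge being the increasing list of its vertex indices. *)
Definition hgraph := seq (seq nat).

Definition rrh_init : hgraph := [:: [:: 1%N]].

Definition rrh_step {R : realType} (r : R) (H : hgraph) : seq (R * hgraph) :=
  let N := size H in
  flatten [seq
    (if e == [:: 1%N] then [:: (N%:R^-1, rcons H [:: 1%N; N.+1])]
     else [:: ((1 - r) / N%:R, rcons H (rcons e N.+1));
              (r / N%:R, rcons H (rcons (take (size e).-1 e) N.+1))])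
  | e <- H].

(* rrh_dist r n : the law (as a weighted list of outcomes) of the RRH of size n.+1. *)
Fixpoint rrh_dist {R : realType} (r : R) (n : nat) : seq (R * hgraph) :=
  match n with
  | 0 => [:: (1, rrh_init)]
  | n'.+1 => flatten [seq [seq (pH.1 * q.1, q.2) | q <- rrh_step r pH.2]
                     | pH <- rrh_dist r n']
  end.

Definition hdeg (H : hgraph) (v : nat) : nat := count (fun e => v \in e) H.

Definition numdeg (H : hgraph) (k : nat) : nat :=
  count (fun v => hdeg H v == k) (iota 1 (size H)).

(* E[N_k(N)] for N >= 1 *)
Definition expected_numdeg {R : realType} (r : R) (k N : nat) : R :=
  \sum_(pH <- rrh_dist r N.-1) pH.1 * (numdeg pH.2 k)%:R.

From HB Require Import structures.
From mathcomp Require Import all_boot all_order all_algebra.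
From mathcomp Require Import all_classical all_reals.
From mathcomp Require Import topology normedtype sequences.
From mathcomp Require Import ring lra zify.
Import Order.TTheory GRing.Theory Num.Theory numFieldNormedType.Exports.
Local Open Scope classical_set_scope.
Local Open Scope ring_scope.

(* Every hypergraph reached by the process is well formed: each edge is an
   increasing list of vertices starting at the root v_1, and each vertex is the
   last element of exactly one edge (the edge created together with it).  Hence
   the root has degree N, and a non-root vertex of degree d belongs to the new
   edge with probability (d - r)/N: it is copied whenever one of its d edges is
   chosen, except when the chosen edge ends at it and is redirected.  So the
   expected number x_k(n) of non-root vertices of degree k at size n+1 obeys
     x_k(n+1) = x_k(n) (1 - (k-r)/(n+1)) + x_{k-1}(n) (k-1-r)/(n+1) + [k = 1]
   (the new vertex has degree 1).  A Cesaro-type lemma shows that a recursion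
   y(n+1) = y(n) (1 - c/(n+1)) + b(n) with b(n) -> beta forces
   y(n)/(n+1) -> beta/(1+c); induction on k then yields the limit of
   x_k(n)/(n+1), and the root only contributes [N = k]/N -> 0. *)

Section WellFormed.
Local Open Scope nat_scope.

Definition wf_edge (N : nat) (e : seq nat) : Prop :=
  [/\ head 0 e = 1, sorted ltn e & forall x, x \in e -> x <= N].

Definition wf_hgraph (H : hgraph) : Prop :=
  (forall e, e \in H -> wf_edge (size H) e) /\
  (forall v, 1 <= v <= size H -> count (fun e => last 0 e == v) H = 1).

Definition new_edge (N : nat) (e : seq nat) : Prop :=
  wf_edge N.+1 e /\ last 0 e = N.+1.

Lemma take_size_pred (T : Type) (x : T) (s : seq T) :
  take (size (x :: s)).-1 (x :: s) = belast x s.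
Proof. by elim: s x => [|y s IH] x //=; rewrite -IH. Qed.

Lemma head1_cons {e : seq nat} : head 0 e = 1 -> exists t, e = 1 :: t.
Proof. by case: e => [|x t] //= ->; exists t. Qed.

Lemma head1_last_in {e : seq nat} : head 0 e = 1 -> last 0 e \in e.
Proof. by move=> /head1_cons [t ->]; exact: mem_last. Qed.

Lemma new_edge_root N : 1 <= N -> new_edge N [:: 1; N.+1].
Proof.
move=> hN; split => //; split => //=; first by rewrite andbT ltnS.
by move=> x; rewrite !inE => /orP [/eqP -> | /eqP ->] //; lia.
Qed.

Lemma new_edge_copy N e : wf_edge N e -> new_edge N (rcons e N.+1).
Proof.
move=> [/head1_cons [t ->] hs hb]; split; last by rewrite /= last_rcons.
split => //.
- by move: hs => /= hs; rewrite rcons_path hs /= ltnS; apply/hb/mem_last.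
- by move=> x; rewrite mem_rcons in_cons => /orP [/eqP -> //| /hb]; lia.
Qed.

Lemma new_edge_redirect N e : e != [:: 1] -> wf_edge N e ->
  new_edge N (rcons (take (size e).-1 e) N.+1).
Proof.
move=> ne [/head1_cons [t et] hs hb]; subst e.
case: t ne hs hb => [|y t] // _ hs hb; rewrite take_size_pred.
have in_e x : x \in 1 :: belast y t -> x \in 1 :: y :: t.
  move=> hx; rewrite in_cons; move: hx; rewrite in_cons.
  by case/orP => [-> // | /mem_belast ->]; rewrite orbT.
have hs' : path ltn 1 (belast y t).
  have : path ltn 1 (y :: t) := hs.
  by rewrite (lastI y t) rcons_path => /andP [].
split; last by rewrite /= last_rcons.
split => //.
- by rewrite /= rcons_path hs' /= ltnS; apply/hb/in_e; exact: mem_last.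
- by move=> x; rewrite mem_rcons in_cons => /orP [/eqP -> //| /in_e /hb]; lia.
Qed.

Lemma wf_hgraph_init : wf_hgraph rrh_init.
Proof.
split; first by move=> e; rewrite inE => /eqP ->; split => // x; rewrite inE => /eqP ->.
by move=> v /= hv; have -> : v = 1 by lia.
Qed.

Lemma wf_hgraph_rcons H e' : wf_hgraph H -> new_edge (size H) e' ->
  wf_hgraph (rcons H e').
Proof.
move=> [h1 h2] [he' el]; split.
  move=> e; rewrite size_rcons mem_rcons inE => /orP [/eqP -> //| he].
  by have [a b c] := h1 e he; split => // x /c; lia.
move=> v; rewrite size_rcons -cats1 count_cat /= addn0 el => /andP [hv1 hv2].
have [hv | hv] := leqP v (size H).
  by rewrite h2 ?hv1 ?hv //; case: eqP => //; lia.
have -> : v = (size H).+1 by lia.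
rewrite eqxx addn1; congr S; apply/eqP; rewrite -leqn0 leqNgt -has_count.
apply/hasPn => e he /=; have [a _ c] := h1 e he.
by have := c _ (head1_last_in a); case: eqP => // ->; lia.
Qed.

Lemma hdeg_rcons H e v : hdeg (rcons H e) v = hdeg H v + (v \in e).
Proof. by rewrite /hdeg -cats1 count_cat /= addn0. Qed.

Lemma hdeg_fresh H : wf_hgraph H -> hdeg H (size H).+1 = 0.
Proof.
move=> [h1 _]; apply/eqP; rewrite -leqn0 leqNgt -has_count.
by apply/hasPn => e he /=; have [_ _ c] := h1 e he; apply/negP => /c; lia.
Qed.

Lemma hdeg_root H : wf_hgraph H -> hdeg H 1 = size H.
Proof.
move=> [h1 _]; rewrite /hdeg -(count_predT H); apply: eq_in_count => e he /=.
by have [a _ _] := h1 e he; have [t ->] := head1_cons a; rewrite inE eqxx.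
Qed.

Definition nonroot_numdeg (H : hgraph) (k : nat) : nat :=
  count (fun v => hdeg H v == k) (iota 2 (size H).-1).

Lemma numdeg_split H k : wf_hgraph H -> 0 < size H ->
  numdeg H k = (size H == k) + nonroot_numdeg H k.
Proof.
by move=> hH N0; rewrite /numdeg /nonroot_numdeg -{1}(prednK N0) /= hdeg_root.
Qed.

(* Every non-root vertex has positive degree: it lies in the edge ending at it. *)
Lemma nonroot_numdeg0 H : wf_hgraph H -> nonroot_numdeg H 0 = 0.
Proof.
move=> [h1 h2]; apply/eqP; rewrite -leqn0 leqNgt -has_count.
apply/hasPn => v; rewrite mem_iota => hv /=.
have : has (fun e => last 0 e == v) H by rewrite has_count h2 //; lia.
move=> /hasP [e he /eqP hl]; have [a _ _] := h1 e he.
rewrite /hdeg -lt0n -has_count; apply/hasP.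
by exists e; rewrite // -hl head1_last_in.
Qed.

End WellFormed.

Section Expectations.
Context {R : realType} (r : R).

Lemma sum_const_seq (T : Type) (s : seq T) (c : R) :
  \sum_(x <- s) c = (size s)%:R * c.
Proof. by rewrite big_const_seq count_predT iter_addr_0 mulr_natl. Qed.

Lemma count_natr (T : Type) (p : pred T) (s : seq T) :
  (count p s)%:R = \sum_(x <- s) (p x)%:R :> R.
Proof.
by rewrite -sum1_count natr_sum big_mkcond; apply: eq_bigr => x _; case: (p x).
Qed.

Lemma step_expectation (H : hgraph) (G : hgraph -> R) :
  \sum_(q <- rrh_step r H) q.1 * G q.2 =
  \sum_(e <- H) (if e == [:: 1%N] then G (rcons H [:: 1%N; (size H).+1])
     else (1 - r) * G (rcons H (rcons e (size H).+1)) +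
          r * G (rcons H (rcons (take (size e).-1 e) (size H).+1))) / (size H)%:R.
Proof.
rewrite /rrh_step big_flatten big_map; apply: eq_bigr => e _.
by case: ifP => _; rewrite !big_cons big_nil /=; ring.
Qed.

Lemma step_support (H : hgraph) q : wf_hgraph H -> q \in rrh_step r H ->
  exists2 e', q.2 = rcons H e' & new_edge (size H) e'.
Proof.
move=> [h1 _]; rewrite /rrh_step => /flattenP [s /mapP [e he ->]].
have [a _ c] := h1 e he.
case: ifP => He; rewrite !inE.
  move=> /eqP -> /=; exists [:: 1%N; (size H).+1] => //.
  by apply/new_edge_root/c; have [t ->] := head1_cons a; rewrite inE eqxx.
move=> /orP [/eqP -> | /eqP ->] /=.
  by exists (rcons e (size H).+1) => //; exact: new_edge_copy (h1 e he).
exists (rcons (take (size e).-1 e) (size H).+1) => //.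
by apply: new_edge_redirect (h1 e he); rewrite He.
Qed.

Lemma step_mass (H : hgraph) : (0 < size H)%N -> \sum_(q <- rrh_step r H) q.1 = 1.
Proof.
move=> N0.
transitivity (\sum_(q <- rrh_step r H) q.1 * (fun _ => 1) q.2).
  by apply: eq_bigr => q _; rewrite mulr1.
rewrite (step_expectation H (fun _ => 1)).
transitivity (\sum_(e <- H) ((size H)%:R^-1 : R)).
  by apply: eq_bigr => e _; case: ifP => _; ring.
by rewrite sum_const_seq divff // pnatr_eq0 -lt0n.
Qed.

Lemma dist_expectation n (G : hgraph -> R) :
  \sum_(pH <- rrh_dist r n.+1) pH.1 * G pH.2 =
  \sum_(pH <- rrh_dist r n) pH.1 * \sum_(q <- rrh_step r pH.2) q.1 * G q.2.
Proof.
rewrite /= big_flatten big_map; apply: eq_bigr => pH _.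
by rewrite big_map big_distrr; apply: eq_bigr => q _ /=; rewrite mulrA.
Qed.

Lemma dist_support n pH : pH \in rrh_dist r n -> size pH.2 = n.+1 /\ wf_hgraph pH.2.
Proof.
elim: n pH => [|n IH] pH.
  by rewrite inE => /eqP -> /=; split => //; exact: wf_hgraph_init.
move=> /flattenP [s /mapP [pH0 h0 ->]] /mapP [q hq ->] /=.
have [s0 i0] := IH _ h0; have [e' -> he'] := step_support pH0.2 q i0 hq.
by rewrite size_rcons s0; split => //; exact: wf_hgraph_rcons.
Qed.

Lemma dist_mass n : \sum_(pH <- rrh_dist r n) pH.1 = 1.
Proof.
elim: n => [|n IH]; first by rewrite /= big_cons big_nil addr0.
transitivity (\sum_(pH <- rrh_dist r n.+1) pH.1 * (fun _ => 1) pH.2).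
  by apply: eq_bigr => pH _; rewrite mulr1.
rewrite (dist_expectation n (fun _ => 1)) -[RHS]IH; apply: eq_big_seq => pH hp.
have [s0 _] := dist_support n pH hp.
have N0 : (0 < size pH.2)%N by rewrite s0.
by under eq_bigr do rewrite mulr1; rewrite step_mass // mulr1.
Qed.

(* A non-root vertex v lies in the new edge with weight [v \in e] when e is
   copied, and misses it only if e ends at v and is redirected: averaging an
   affine function of that indicator over the two choices. *)
Lemma new_edge_mem_average (H : hgraph) e v (X D : R) : wf_hgraph H -> e \in H ->
  (2 <= v <= size H)%N ->
  (if e == [:: 1%N] then X + (v \in [:: 1%N; (size H).+1])%:R * D
   else (1 - r) * (X + (v \in rcons e (size H).+1)%:R * D) +
        r * (X + (v \in rcons (take (size e).-1 e) (size H).+1)%:R * D))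
  = X + ((v \in e)%:R - r * (last 0%N e == v)%:R) * D.
Proof.
move=> [h1 _] he hv; have [a hs _] := h1 e he; have [t et] := head1_cons a.
have vN : (v == (size H).+1) = false by apply/eqP; lia.
have v1 : (v == 1%N) = false by apply/eqP; lia.
have v1' : (1 == v)%N = false by rewrite eq_sym.
case: ifP => He.
  by move/eqP: He => ->; rewrite !inE /= vN v1 v1' /=; ring.
rewrite !mem_rcons !inE vN /=.
have : uniq e by exact: (sorted_uniq ltn_trans ltnn).
rewrite et take_size_pred [in X in uniq X](lastI 1%N t) rcons_uniq.
rewrite (lastI 1%N t) !mem_rcons !inE last_rcons.
case: (eqVneq v (last 1%N t)) => [->|ne] /=.
  by move=> /andP [/negbTE -> _] /=; ring.
by case: (v \in belast 1%N t) => _ /=; ring.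
Qed.

Lemma eqn_addb_indicator (d k : nat) (b : bool) : (1 <= k)%N ->
  ((d + b == k)%N)%:R = (d == k)%:R + b%:R * ((d == k.-1)%:R - (d == k)%:R) :> R.
Proof.
move=> hk; case: b => /=; last by rewrite addn0 mul0r addr0.
by rewrite mul1r addrC subrK; congr (_%:R); apply/eqP/eqP; lia.
Qed.

Lemma vertex_degree_step (H : hgraph) v k : wf_hgraph H -> (2 <= v <= size H)%N ->
  (1 <= k)%N ->
  \sum_(q <- rrh_step r H) q.1 * ((hdeg q.2 v == k)%N)%:R =
  ((hdeg H v == k)%N)%:R * (1 - (k%:R - r) / (size H)%:R) +
  ((hdeg H v == k.-1)%N)%:R * ((k.-1)%:R - r) / (size H)%:R.
Proof.
move=> hH hv hk; set N := size H; set d := hdeg H v.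
have N0 : (N%:R : R) != 0 by rewrite pnatr_eq0 /N; lia.
set X := ((d == k)%N)%:R : R; set D := ((d == k.-1)%N)%:R - X.
rewrite (step_expectation H (fun H' => ((hdeg H' v == k)%N)%:R)) -/N.
transitivity (\sum_(e <- H) (X + ((v \in e)%:R - r * (last 0%N e == v)%:R) * D) / N%:R).
  apply: eq_big_seq => e he; rewrite -(new_edge_mem_average H e v X D hH he hv).
  by rewrite !hdeg_rcons !eqn_addb_indicator.
rewrite -mulr_suml big_split /= sum_const_seq -mulr_suml big_split /= sumrN.
rewrite -mulr_sumr -!count_natr -/(hdeg H v) -/d -/N.
have -> : count (fun e => last 0%N e == v) H = 1%N by apply: hH.2; lia.
rewrite /D /X; have [->|nk] := eqVneq d k.
  by rewrite (_ : (k == k.-1) = false) /=; [field | apply/eqP; lia].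
by have [->|nk1] := eqVneq d k.-1; rewrite /=; field.
Qed.

(* After a step, the new vertex is a non-root vertex of degree 1. *)
Lemma nonroot_numdeg_rcons (H : hgraph) e' k : wf_hgraph H -> (0 < size H)%N ->
  new_edge (size H) e' ->
  (nonroot_numdeg (rcons H e') k)%:R =
  \sum_(v <- iota 2 (size H).-1) ((hdeg (rcons H e') v == k)%N)%:R
  + ((k == 1)%N)%:R :> R.
Proof.
move=> hH N0 [[eh _ _] el]; rewrite /nonroot_numdeg size_rcons /=.
have -> : iota 2 (size H) = iota 2 (size H).-1 ++ [:: (size H).+1].
  have E : size H = ((size H).-1 + 1)%N by lia.
  by rewrite {1}E iotaD; congr (_ ++ [:: _]); lia.
rewrite count_cat natrD count_natr; congr (_ + _).
by rewrite /= addn0 hdeg_rcons hdeg_fresh // -el head1_last_in // eq_sym.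
Qed.

Lemma nonroot_numdeg_step (H : hgraph) k : wf_hgraph H -> (0 < size H)%N ->
  (1 <= k)%N ->
  \sum_(q <- rrh_step r H) q.1 * (nonroot_numdeg q.2 k)%:R =
  (nonroot_numdeg H k)%:R * (1 - (k%:R - r) / (size H)%:R) +
  (nonroot_numdeg H k.-1)%:R * ((k.-1)%:R - r) / (size H)%:R + ((k == 1)%N)%:R.
Proof.
move=> hH N0 hk; set I := iota 2 (size H).-1.
transitivity (\sum_(q <- rrh_step r H) q.1 *
   (\sum_(v <- I) ((hdeg q.2 v == k)%N)%:R + ((k == 1)%N)%:R)).
  apply: eq_big_seq => q hq; have [e' -> he'] := step_support H q hH hq.
  by rewrite nonroot_numdeg_rcons.
under eq_bigr do rewrite mulrDr mulr_sumr.
rewrite big_split /= -mulr_suml step_mass // mul1r exchange_big /=; congr (_ + _).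
transitivity (\sum_(v <- I)
  (((hdeg H v == k)%N)%:R * (1 - (k%:R - r) / (size H)%:R) +
  ((hdeg H v == k.-1)%N)%:R * ((k.-1)%:R - r) / (size H)%:R)).
  by apply: eq_big_seq => v; rewrite mem_iota => hv; apply: vertex_degree_step => //; lia.
rewrite big_split /= -mulr_suml.
under [X in _ + X = _]eq_bigr do rewrite -mulrA.
by rewrite -mulr_suml /nonroot_numdeg !count_natr mulrA.
Qed.

Definition nonroot_mean (k n : nat) : R :=
  \sum_(pH <- rrh_dist r n) pH.1 * (nonroot_numdeg pH.2 k)%:R.

Lemma nonroot_mean_rec k n : (1 <= k)%N ->
  nonroot_mean k n.+1 = nonroot_mean k n * (1 - (k%:R - r) / n.+1%:R) +
    (nonroot_mean k.-1 n * ((k.-1)%:R - r) / n.+1%:R + ((k == 1)%N)%:R).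
Proof.
move=> hk; rewrite /nonroot_mean (dist_expectation n (fun H => (nonroot_numdeg H k)%:R)).
transitivity (\sum_(pH <- rrh_dist r n)
   (pH.1 * (nonroot_numdeg pH.2 k)%:R * (1 - (k%:R - r) / n.+1%:R)
   + (pH.1 * (nonroot_numdeg pH.2 k.-1)%:R * (((k.-1)%:R - r) / n.+1%:R)
      + pH.1 * ((k == 1)%N)%:R))).
  apply: eq_big_seq => pH hp; have [s0 hH] := dist_support n pH hp.
  by rewrite nonroot_numdeg_step // ?s0 //; ring.
by rewrite !big_split /= -!mulr_suml dist_mass mul1r mulrA.
Qed.

Lemma nonroot_mean0 n : nonroot_mean 0 n = 0.
Proof.
rewrite /nonroot_mean big_seq big1 // => pH hp; have [_ hH] := dist_support n pH hp.
by rewrite nonroot_numdeg0 // mulr0.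
Qed.

Lemma expected_numdeg_split k n :
  expected_numdeg r k n.+1 = nonroot_mean k n + ((n.+1 == k)%N)%:R.
Proof.
rewrite /expected_numdeg /= /nonroot_mean.
transitivity (\sum_(pH <- rrh_dist r n)
  (pH.1 * (nonroot_numdeg pH.2 k)%:R + pH.1 * ((n.+1 == k)%N)%:R)).
  apply: eq_big_seq => pH hp; have [s0 hH] := dist_support n pH hp.
  by rewrite numdeg_split // ?s0 // natrD mulrDr addrC.
by rewrite big_split /= -mulr_suml dist_mass mul1r.
Qed.

End Expectations.

Section LinearRecurrence.
Context {R : realType}.

Lemma perturbed_bound (z e : R^nat) (n1 : nat) :
  (forall n, (n1 <= n)%N -> `|z n.+1| <= `|z n| + `|e n|) ->
  forall m, `|z (m + n1)%N| <= `|z n1| + \sum_(0 <= i < m + n1) `|e i|.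
Proof.
move=> hstep; elim=> [|m IH].
  by rewrite add0n lerDl; apply: sumr_ge0 => i _; exact: normr_ge0.
rewrite addSn big_nat_recr //= addrA.
by apply: le_trans (hstep _ (leq_addl _ _)) _; exact: lerD.
Qed.

Lemma contraction_factor (c : R) n : 0 <= c -> c <= n.+1%:R ->
  `|1 - c / n.+1%:R| <= 1.
Proof.
move=> c0 cn; have np : 0 < n.+1%:R :> R by rewrite ltr0n.
have h1 : c / n.+1%:R <= 1 by rewrite ler_pdivrMr // mul1r.
have h2 : 0 <= c / n.+1%:R by rewrite divr_ge0 // ltW.
by move: h1 h2; set t := c / _ => h1 h2; rewrite ger0_norm; lra.
Qed.

(* If y(n+1) = y(n) (1 - c/(n+1)) + b(n) and b(n) -> beta, then y(n)/(n+1)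
   tends to a = beta/(1+c): the error z(n) = y(n) - a (n+1) follows the same
   recursion with a vanishing perturbation e(n) = b(n) - beta, so |z(n)|/(n+1)
   is bounded by |z(n1)|/(n+1) plus the Cesaro means of |e|. *)
Lemma linear_recurrence_limit {y b : R^nat} {c beta : R} : 0 <= c ->
  (forall n, y n.+1 = y n * (1 - c / n.+1%:R) + b n) ->
  b @ \oo --> beta ->
  (fun n => y n / n.+1%:R) @ \oo --> beta / (1 + c).
Proof.
move=> c0 rec bcv; set a := beta / (1 + c).
have c1 : 1 + c != 0 by apply/lt0r_neq0; lra.
pose z n := y n - a * n.+1%:R; pose e n := b n - beta.
have zrec n : z n.+1 = z n * (1 - c / n.+1%:R) + e n.
  rewrite /z /e rec /a -!natr1; field; apply/andP; split => //.
  by apply/lt0r_neq0; rewrite ltr_wpDl.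
have ecv : e @ \oo --> 0 by rewrite -(subrr beta); apply: cvgB => //; exact: cvg_cst.
have aecv : arithmetic_mean (fun n => `|e n|) @ \oo --> 0.
  by apply: cesaro; rewrite -(@normr0 _ R); exact: cvg_norm.
pose n1 := Num.Def.archi_bound c.
have zstep n : (n1 <= n)%N -> `|z n.+1| <= `|z n| + `|e n|.
  move=> hn; have cn : c <= n.+1%:R.
    by apply: le_trans (ltW (archi_boundP c0)) _; rewrite ler_nat; lia.
  rewrite zrec (le_trans (ler_normD _ _)) // lerD2r normrM -[leRHS]mulr1.
  by apply: ler_wpM2l; [exact: normr_ge0 | exact: contraction_factor].
have zcv : (fun n => z n / n.+1%:R) @ \oo --> 0.
  apply/norm_cvg0P; apply: (@squeeze_cvgr _ _ _ _ (fun=> 0)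
     (fun n => `|z n1| * harmonic n + arithmetic_mean (fun n => `|e n|) n)).
  - exists n1 => // n /= hn; rewrite normr_ge0 /=.
    have := @perturbed_bound z e n1 zstep (n - n1)%N; rewrite subnK // => hz.
    rewrite normrM normfV (ger0_norm (ler0n _ _)) /= mulrC.
    rewrite /arithmetic_mean /= seriesEnat /= [_ / _]mulrC -mulrDr ler_wpM2l //.
      by rewrite invr_ge0.
    by apply: le_trans hz _; rewrite lerD2l big_nat_recr //= lerDl normr_ge0.
  - exact: cvg_cst.
  - rewrite -[0]addr0; apply: cvgD => //.
    rewrite -(mulr0 `|z n1|); apply: cvgM; [exact: cvg_cst | exact: cvg_harmonic].
have -> : (fun n => y n / n.+1%:R) = (fun n => a + z n / n.+1%:R).
  by apply: funext => n; rewrite /z; field; rewrite lt0r_neq0 // ltr_pwDl.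
by rewrite -[X in _ --> X]addr0; apply: cvgD => //; exact: cvg_cst.
Qed.

End LinearRecurrence.

Section Limits.
Context {R : realType} {r : R}.

Definition degree_density (k : nat) : R := (1 - r) / ((k%:R - r + 1) * (k%:R - r)).

(* The densities satisfy the limit form of the recursion for x_k:
   a_1 = 1/(1 + (1-r)) and a_{j+1} = a_j (j-r) / (1 + (j+1-r)). *)
Lemma degree_density1 : r < 1 -> degree_density 1 = 1 / (1 + (1%:R - r)).
Proof.
by move=> hr1; rewrite /degree_density; field; apply/andP; split; apply/lt0r_neq0; lra.
Qed.

Lemma degree_densityS j : r < 1 -> (1 <= j)%N ->
  degree_density j.+1 = degree_density j * (j%:R - r) / (1 + (j.+1%:R - r)).
Proof.
move=> hr1 hj; have j1 : 1 <= j%:R :> R by rewrite ler1n.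
by rewrite /degree_density -natr1; field; rewrite !lt0r_neq0 //; lra.
Qed.

Lemma nonroot_mean_limit (hr1 : r < 1) k : (1 <= k)%N ->
  (fun n => nonroot_mean r k n / n.+1%:R) @ \oo --> degree_density k.
Proof.
elim: k => [//|j IH] _.
have c0 : 0 <= j.+1%:R - r by rewrite subr_ge0 (le_trans (ltW hr1)) // ler1n.
have [j0|j0] := eqVneq j 0%N.
  subst j; have rec n : nonroot_mean r 1 n.+1 =
      nonroot_mean r 1 n * (1 - (1%:R - r) / n.+1%:R) + 1.
    by rewrite nonroot_mean_rec // nonroot_mean0 !mul0r add0r.
  rewrite degree_density1 //; apply: (linear_recurrence_limit c0 rec).
  exact: cvg_cst.
have rec n : nonroot_mean r j.+1 n.+1 =
    nonroot_mean r j.+1 n * (1 - (j.+1%:R - r) / n.+1%:R)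
    + nonroot_mean r j n / n.+1%:R * (j%:R - r).
  by rewrite nonroot_mean_rec // eqSS (negbTE j0) addr0 mulrAC.
rewrite degree_densityS ?lt0n //; apply: (linear_recurrence_limit c0 rec).
by apply: cvgM; [apply: IH; rewrite lt0n | exact: cvg_cst].
Qed.

End Limits.

Lemma indicator_over_n_vanishes (R : realType) (k : nat) :
  (fun n => ((n.+1 == k)%N)%:R / n.+1%:R) @ \oo --> (0 : R).
Proof.
apply: (@squeeze_cvgr _ _ _ _ (fun=> 0) (@harmonic R)); last exact: cvg_harmonic.
- exists 0%N => // n _ /=; case: (_ == _) => /=.
    by rewrite mul1r invr_ge0 ler0n lexx.
  by rewrite mul0r lexx invr_ge0 ler0n.
- exact: cvg_cst.
Qed.

Theorem mainTheorem14 (R : realType) (r : R) (hr0 : 0 <= r) (hr1 : r < 1)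
  (k : nat) (hk : (1 <= k)%N) :
  (fun N : nat => expected_numdeg r k N / N%:R) @ \oo -->
    (1 - r) / ((k%:R - r + 1) * (k%:R - r)).
Proof.
rewrite -cvg_shiftS /=.
have -> : (fun n : nat => expected_numdeg r k n.+1 / n.+1%:R) =
  (fun n => nonroot_mean r k n / n.+1%:R + ((n.+1 == k)%N)%:R / n.+1%:R).
  by apply: funext => n; rewrite expected_numdeg_split mulrDl.
have lim_sum := cvgD (nonroot_mean_limit hr1 k hk) (indicator_over_n_vanishes R k).
by rewrite addr0 in lim_sum; exact: lim_sum.
Qed.
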